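(* Let $X$ be a locally compact, geodesically complete CAT(0)-space connected at infinity, and let $x_0,y\in X$, $y\neq x_0$. For every $K>0$ and $\varepsilon>0$ there exists $\delta>0$ such that for every $x_1\in B(x_0,\delta)$ with $|yx_1|=|yx_0|$, $$\partial_\infty(\operatorname{Shadow}_y(x_1))\subset\mathcal N_{y,K,\varepsilon}\big(\partial_\infty(\operatorname{Shadow}_y(x_0))\big).$$
   Context: For $y,z\in\overline X=X\cup\partial_\infty X$, $[yz]$ denotes a geodesic segment, ray or complete geodesic joining them; $\operatorname{Shadow}_y(x)=\{z\in\overline X:\ \text{there is }[yz]\text{ with }x\in[yz]\}$ and $\partial_\infty(\operatorname{Shadow}_y(x))=\operatorname{Shadow}_y(x)\cap\partial_\infty X$. For $\mathcal V\subset\partial_\infty X$, $\mathcal N_{y,K,\varepsilon}(\mathcal V)$ is the set of $\zeta\in\partial_\infty X$ for which there is $\xi\in\mathcal V$ with $|c(K)\,c_*(K)|<\varepsilon$, where $c=[y\xi]$ and $c_*=[y\zeta]$ are the arclength-parametrized rays from $y$. *)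

From Stdlib Require Import Reals Lra List.
Open Scope R_scope.
Set Implicit Arguments.

Section Defs.
Variable X : Type.
Variable d : X -> X -> R.

Definition is_metric : Prop :=
  (forall x y, 0 <= d x y) /\ (forall x y, d x y = 0 <-> x = y) /\
  (forall x y, d x y = d y x) /\ (forall x y z, d x z <= d x y + d y z).

Definition complete_metric : Prop :=
  forall u : nat -> X,
    (forall e, 0 < e -> exists N, forall m n, (N <= m)%nat -> (N <= n)%nat -> d (u m) (u n) < e) ->
    exists l, forall e, 0 < e -> exists N, forall n, (N <= n)%nat -> d (u n) l < e.

Definition geod_seg (c : R -> X) (a b : X) (L : R) : Prop :=
  0 <= L /\ c 0 = a /\ c L = b /\
  forall s t, 0 <= s <= L -> 0 <= t <= L -> d (c s) (c t) = Rabs (s - t).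

Definition geodesic_space : Prop :=
  forall a b, exists c, geod_seg c a b (d a b).

Definition eucl (P Q : R * R) : R :=
  sqrt ((fst P - fst Q) ^ 2 + (snd P - snd Q) ^ 2).

(** point at arclength t on the segment from A to B of length L *)
Definition lerp (A B : R * R) (L t : R) : R * R :=
  if Req_EM_T L 0 then A
  else (fst A + (t / L) * (fst B - fst A), snd A + (t / L) * (snd B - snd A)).

Inductive side := S1 | S2 | S3.

Definition CAT0_comparison : Prop :=
  forall (p q r : X) (c1 c2 c3 : R -> X),
    geod_seg c1 p q (d p q) -> geod_seg c2 q r (d q r) -> geod_seg c3 r p (d r p) ->
    forall P Q Rr : R * R,
      eucl P Q = d p q -> eucl Q Rr = d q r -> eucl Rr P = d r p ->
      let len i := match i with S1 => d p q | S2 => d q r | S3 => d r p end in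
      let pt i t := match i with S1 => c1 t | S2 => c2 t | S3 => c3 t end in
      let cpt i t := match i with
                     | S1 => lerp P Q (d p q) t
                     | S2 => lerp Q Rr (d q r) t
                     | S3 => lerp Rr P (d r p) t end in
      forall i j s t, 0 <= s <= len i -> 0 <= t <= len j ->
        d (pt i s) (pt j t) <= eucl (cpt i s) (cpt j t).

(** CAT(0) space (complete, as usual) *)
Definition CAT0 : Prop :=
  is_metric /\ complete_metric /\ geodesic_space /\ CAT0_comparison.

Definition metric_open (U : X -> Prop) : Prop :=
  forall x, U x -> exists r, 0 < r /\ forall y, d x y < r -> U y.

Definition compact_set (Kc : X -> Prop) : Prop :=
  forall (I : Type) (U : I -> X -> Prop),
    (forall i, metric_open (U i)) ->
    (forall x, Kc x -> exists i, U i x) ->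
    exists s : list I, forall x, Kc x -> exists i, In i s /\ U i x.

Definition locally_compact : Prop :=
  forall x, exists Kc r, 0 < r /\ compact_set Kc /\ forall y, d x y < r -> Kc y.

Definition geod_complete : Prop :=
  forall (c : R -> X) a b L, 0 < L -> geod_seg c a b L ->
    exists g : R -> X, (forall s t, d (g s) (g t) = Rabs (s - t)) /\
                       (forall t, 0 <= t <= L -> g t = c t).

(** geodesic rays; boundary points are represented by rays up to asymptoty *)
Definition is_ray (c : R -> X) : Prop :=
  forall s t, 0 <= s -> 0 <= t -> d (c s) (c t) = Rabs (s - t).

Definition ray_from (y : X) (c : R -> X) : Prop := is_ray c /\ c 0 = y.

Definition asymp (c c' : R -> X) : Prop :=
  exists B, forall t, 0 <= t -> d (c t) (c' t) <= B.

(** ∂∞(Shadow_y(x)): boundary points ζ such that a ray [yζ] passes through x *)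
Definition bd_shadow (y x : X) (zeta : R -> X) : Prop :=
  exists c, ray_from y c /\ asymp c zeta /\ exists t, 0 <= t /\ c t = x.

Definition Nbhd (y : X) (K eps : R) (V : (R -> X) -> Prop) (zeta : R -> X) : Prop :=
  exists xi, is_ray xi /\ V xi /\
    forall c cs, ray_from y c -> asymp c xi -> ray_from y cs -> asymp cs zeta ->
      d (c K) (cs K) < eps.

Definition cone_open (o : X) (U : (R -> X) -> Prop) : Prop :=
  (forall xi eta, is_ray xi -> is_ray eta -> asymp xi eta -> U xi -> U eta) /\
  forall xi, is_ray xi -> U xi ->
    exists K eps, 0 < K /\ 0 < eps /\
      forall zeta, is_ray zeta -> Nbhd o K eps (fun eta => asymp eta xi) zeta -> U zeta.

Definition connected_at_infinity : Prop :=
  forall (o : X) (A B : (R -> X) -> Prop),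
    cone_open o A -> cone_open o B ->
    (forall zeta, is_ray zeta -> A zeta \/ B zeta) ->
    (forall zeta, is_ray zeta -> ~ (A zeta /\ B zeta)) ->
    (forall zeta, is_ray zeta -> ~ A zeta) \/ (forall zeta, is_ray zeta -> ~ B zeta).

End Defs.

(* Rays issuing from y contract towards y: by CAT(0) comparison with an isosceles
   Euclidean triangle, |c(s) c'(s)| <= (s/t) |c(t) c'(t)| for s <= t.  In particular
   two asymptotic rays from y coincide, and it suffices to find, for the ray g1
   through x1, a ray g through x0 that is close to g1 at the single time
   M = K + |y x0|.  The point p = g1(M) satisfies |y p| = M and
   |x0 p| <= M - |y x0| + |x0 x1|.  Closed balls are compact (Hopf-Rinow for the
   complete, locally compact geodesic space X), so such a p is, once |x0 x1| is
   small, close to a point q with |y q| = |y x0| + |x0 q|.  The broken geodesic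
   y x0 q is then a geodesic, which extends to a ray g through x0 (geodesic
   completeness), and |g(M) g1(M)| <= 2 |q p|. *)

From Stdlib Require Import Reals Lra Lia List ClassicalEpsilon.
Open Scope R_scope.

Lemma le_of_le_add_eps a b : (forall e, 0 < e -> a <= b + e) -> a <= b.
Proof. intros H. destruct (Rle_dec a b); auto. specialize (H ((a - b) / 2)). lra. Qed.

Lemma half_pow_pos n : 0 < (1/2)^n.
Proof. apply pow_lt; lra. Qed.

Lemma half_pow_small e : 0 < e -> exists N, forall n, (N <= n)%nat -> (1/2)^n < e.
Proof.
  intros He. destruct (pow_lt_1_zero (1/2)) with (y := e) as [N HN]; auto.
  { rewrite Rabs_right; lra. }
  exists N. intros n Hn. specialize (HN n Hn).
  rewrite Rabs_right in HN; auto. apply Rle_ge, pow_le; lra.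
Qed.

Lemma list_min_pos {A : Type} (f : A -> R) (s : list A) :
  (forall a, In a s -> 0 < f a) -> exists e, 0 < e /\ forall a, In a s -> e <= f a.
Proof.
  induction s as [|a s IH]; intros H.
  - exists 1. split; [lra | intros a []].
  - destruct IH as [e [He Hmin]]; [intros; apply H; simpl; auto|].
    exists (Rmin (f a) e). split; [apply Rmin_pos; auto; apply H; simpl; auto|].
    intros b [<-|Hb]; [apply Rmin_l|].
    eapply Rle_trans; [apply Rmin_r | auto].
Qed.

Lemma dependent_choice_nat {A : Type} (P : nat -> A -> Prop) (Q : nat -> A -> A -> Prop) a0 :
  P 0%nat a0 -> (forall k a, P k a -> exists b, P (S k) b /\ Q k a b) ->
  exists f : nat -> A, forall k, P k (f k) /\ Q k (f k) (f (S k)).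
Proof.
  intros Hbase Hstep.
  destruct (choice (fun (ka : nat * A) b =>
              P (fst ka) (snd ka) -> P (S (fst ka)) b /\ Q (fst ka) (snd ka) b)) as [g Hg].
  { intros [k a]. destruct (classic (P k a)) as [Hp|Hn].
    - destruct (Hstep k a Hp) as [b Hb]. exists b. auto.
    - exists a. tauto. }
  set (f := fix f k := match k with O => a0 | S k' => g (k', f k') end).
  assert (HP : forall k, P k (f k)).
  { induction k as [|k IH]; [exact Hbase|]. exact (proj1 (Hg (k, f k) IH)). }
  exists f. intros k. split; [apply HP|]. exact (proj2 (Hg (k, f k) (HP k))).
Qed.

Section Metric.
Set Implicit Arguments.
Variables (X : Type) (d : X -> X -> R).
Hypothesis Hm : is_metric d.

Lemma metric_ge0 x y : 0 <= d x y.
Proof. apply Hm. Qed.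

Lemma metric_xx x : d x x = 0.
Proof. apply Hm. reflexivity. Qed.

Lemma metric_eq0 x y : d x y = 0 -> x = y.
Proof. apply Hm. Qed.

Lemma metric_sym x y : d x y = d y x.
Proof. apply Hm. Qed.

Lemma metric_triangle x y z : d x z <= d x y + d y z.
Proof. apply Hm. Qed.

Lemma ball_open x r : metric_open d (fun z => d x z < r).
Proof.
  intros z Hz. exists (r - d x z). split; [lra|].
  intros w Hw. pose proof (metric_triangle x z w). lra.
Qed.

Definition finite_subcover (I : Type) (U : I -> X -> Prop) (A : X -> Prop) : Prop :=
  exists s : list I, forall x, A x -> exists i, In i s /\ U i x.

Lemma finite_subcover_sub I (U : I -> X -> Prop) (A B : X -> Prop) :
  (forall z, A z -> B z) -> finite_subcover U B -> finite_subcover U A.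
Proof. intros HAB [s Hs]. exists s. auto. Qed.

Lemma finite_subcover_list_union I (U : I -> X -> Prop) J (L : list J) (A : J -> X -> Prop) :
  (forall j, In j L -> finite_subcover U (A j)) ->
  finite_subcover U (fun z => exists j, In j L /\ A j z).
Proof.
  induction L as [|j L IH]; intros H.
  - exists nil. intros x [j [[] _]].
  - destruct (H j (or_introl eq_refl)) as [s1 H1].
    destruct IH as [s2 H2]; [intros; apply H; simpl; auto|].
    exists (s1 ++ s2). intros x [j' [[<-|Hj'] Hx]].
    + destruct (H1 x Hx) as [i [Hi Ui]]. exists i. split; auto. apply in_or_app; auto.
    + destruct (H2 x (ex_intro _ j' (conj Hj' Hx))) as [i [Hi Ui]].
      exists i. split; auto. apply in_or_app; auto.
Qed.

Lemma no_finite_subcover_piece I (U : I -> X -> Prop) (A : X -> Prop) J (L : list J)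
    (B : J -> X -> Prop) :
  (forall z, A z -> exists j, In j L /\ B j z) -> ~ finite_subcover U A ->
  exists j, In j L /\ ~ finite_subcover U (fun z => A z /\ B j z).
Proof.
  intros Hcov HA. apply NNPP. intros Hall. apply HA.
  eapply finite_subcover_sub;
    [|apply (finite_subcover_list_union (U := U) L (fun j z => A z /\ B j z))].
  - intros z Hz. destruct (Hcov z Hz) as [j [Hj HB]]. eauto.
  - intros j Hj. apply NNPP. intros Hn. apply Hall. eauto.
Qed.

Lemma compact_list_union J (L : list J) (C : J -> X -> Prop) :
  (forall j, In j L -> compact_set d (C j)) ->
  compact_set d (fun z => exists j, In j L /\ C j z).
Proof.
  intros HC I U HU Hcov. apply finite_subcover_list_union.
  intros j Hj. apply (HC j Hj I U HU). intros x Hx. apply Hcov. eauto.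
Qed.

Lemma compact_totally_bounded C : compact_set d C ->
  forall e, 0 < e -> exists L : list X, forall z, C z -> exists c, In c L /\ d c z < e.
Proof.
  intros HC e He. apply (HC X (fun x z => d x z < e)).
  - intros x. apply ball_open.
  - intros x _. exists x. rewrite metric_xx. exact He.
Qed.

Lemma half_pow_steps_bound (u : nat -> X) :
  (forall k, d (u k) (u (S k)) < 2 * (1/2)^k) ->
  forall k m, (k <= m)%nat -> d (u k) (u m) <= 4 * (1/2)^k.
Proof.
  intros Hstep.
  assert (Htel : forall k j, d (u k) (u (k + j)%nat) <= 4 * (1/2)^k - 4 * (1/2)^(k + j)).
  { intros k j. induction j as [|j IH].
    - rewrite Nat.add_0_r, metric_xx. lra.
    - replace (k + S j)%nat with (S (k + j)) by lia.
      pose proof (metric_triangle (u k) (u (k + j)%nat) (u (S (k + j)))).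
      pose proof (Hstep (k + j)%nat). simpl. lra. }
  intros k m Hkm. replace m with (k + (m - k))%nat by lia.
  pose proof (Htel k (m - k)%nat). pose proof (half_pow_pos (k + (m - k))). lra.
Qed.

Lemma no_finite_subcover_nonempty I (U : I -> X -> Prop) (A : X -> Prop) :
  ~ finite_subcover U A -> exists z, A z.
Proof.
  intros HA. apply NNPP. intros Hempty. apply HA. exists nil.
  intros x Hx. exfalso. eauto.
Qed.

Lemma no_finite_subcover_nested_balls I (U : I -> X -> Prop) (C : X -> Prop) :
  (forall e, 0 < e -> exists L : list X, forall z, C z -> exists c, In c L /\ d c z < e) ->
  ~ finite_subcover U C ->
  exists f : nat -> X, forall k,
    ~ finite_subcover U (fun z => C z /\ d (f k) z < (1/2)^k) /\
    d (f k) (f (S k)) < 2 * (1/2)^k.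
Proof.
  intros Htb HC.
  destruct (Htb 1 Rlt_0_1) as [L0 HL0].
  destruct (no_finite_subcover_piece L0 (fun c z => d c z < 1) HL0 HC) as [c0 [_ Hc0]].
  apply (dependent_choice_nat (fun k c => ~ finite_subcover U (fun z => C z /\ d c z < (1/2)^k))
           (fun k c c' => d c c' < 2 * (1/2)^k) c0); [exact Hc0|].
  intros k c Hc.
  destruct (Htb ((1/2)^(S k)) (half_pow_pos (S k))) as [L HL].
  destruct (no_finite_subcover_piece (U := U) (A := fun z => C z /\ d c z < (1/2)^k) L
              (fun c' z => d c' z < (1/2)^(S k))) as [c' [_ Hc']];
    [intros z [Hz _]; auto | exact Hc |].
  exists c'. split.
  - intros Hfin. apply Hc'. eapply finite_subcover_sub; [|exact Hfin].
    intros z [[Hz _] Hz']. split; auto.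
  - destruct (no_finite_subcover_nonempty Hc') as [z [[_ Hcz] Hc'z]].
    pose proof (metric_triangle c z c') as Htri. rewrite (metric_sym z c') in Htri.
    simpl in Hc'z. pose proof (half_pow_pos k). lra.
Qed.

Lemma compact_of_complete_totally_bounded (C : X -> Prop) : complete_metric d ->
  (forall l, (forall e, 0 < e -> exists z, C z /\ d z l < e) -> C l) ->
  (forall e, 0 < e -> exists L : list X, forall z, C z -> exists c, In c L /\ d c z < e) ->
  compact_set d C.
Proof.
  intros Hcomp Hclosed Htb I U HU Hcov. apply NNPP. intros HC.
  destruct (no_finite_subcover_nested_balls Htb HC) as [f Hf].
  assert (Hcauchy := half_pow_steps_bound f (fun k => proj2 (Hf k))).
  destruct (Hcomp f) as [l Hl].
  { intros e He. destruct (half_pow_small (e / 8)) as [N HN]; [lra|].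
    exists N. intros m n Hmn Hnn. specialize (HN N (le_n N)).
    pose proof (Hcauchy N m Hmn). pose proof (Hcauchy N n Hnn).
    pose proof (metric_triangle (f m) (f N) (f n)) as Htri.
    rewrite (metric_sym (f m) (f N)) in Htri. lra. }
  assert (Hclose : forall e, 0 < e -> exists n, (1/2)^n < e /\ d (f n) l < e).
  { intros e He. destruct (half_pow_small e He) as [N1 H1]. destruct (Hl e He) as [N2 H2].
    exists (Nat.max N1 N2). split; [apply H1 | apply H2]; lia. }
  assert (Hl_in : C l).
  { apply Hclosed. intros e He. destruct (Hclose (e / 2)) as [n [Hn Hfn]]; [lra|].
    destruct (no_finite_subcover_nonempty (proj1 (Hf n))) as [z [Hz Hzf]].
    exists z. split; auto.
    pose proof (metric_triangle z (f n) l) as Htri. rewrite (metric_sym z (f n)) in Htri. lra. }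
  (* the ball around [f n] lies in a single member of the cover, once it is small *)
  destruct (Hcov l Hl_in) as [i Hi]. destruct (HU i l Hi) as [r [Hr HUr]].
  destruct (Hclose (r / 2)) as [n [Hn Hfn]]; [lra|].
  apply (proj1 (Hf n)). exists (i :: nil). intros z [Hz Hzf]. exists i. split; [left; auto|].
  apply HUr. pose proof (metric_triangle l (f n) z) as Htri.
  rewrite (metric_sym l (f n)) in Htri. lra.
Qed.

Lemma compact_lsc_small_in_open (C W : X -> Prop) (f : X -> R) :
  compact_set d C -> metric_open d W -> (forall a, metric_open d (fun z => a < f z)) ->
  (forall z, C z -> ~ W z -> 0 < f z) ->
  exists delta, 0 < delta /\ forall z, C z -> f z < delta -> W z.
Proof.
  intros HC HW Hf Hpos.
  destruct (HC (option {a : R | 0 < a})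
              (fun i z => match i with None => W z | Some a => proj1_sig a < f z end))
    as [s Hs].
  - intros [a|]; auto.
  - intros z Hz. destruct (classic (W z)) as [Hw|Hw]; [exists None; exact Hw|].
    assert (Hhalf : 0 < f z / 2) by (pose proof (Hpos z Hz Hw); lra).
    exists (Some (exist _ (f z / 2) Hhalf)). simpl. lra.
  - destruct (list_min_pos (fun i : option {a : R | 0 < a} =>
                              match i with None => 1 | Some a => proj1_sig a end) s)
      as [delta [Hdelta Hmin]].
    { intros [[a Ha]|] _; simpl; lra. }
    exists delta. split; auto. intros z Hz Hlt.
    destruct (Hs z Hz) as [[[a Ha]|] [Hin Hu]]; auto.
    specialize (Hmin _ Hin). simpl in *. lra.
Qed.

End Metric.

Section Geodesics.
Set Implicit Arguments.
Variables (X : Type) (d : X -> X -> R).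

Lemma geod_seg_dist_start c a b L t :
  geod_seg d c a b L -> 0 <= t <= L -> d a (c t) = t.
Proof.
  intros (HL & Hc0 & _ & Hc) Ht. rewrite <- Hc0, Hc, Rabs_left1; lra.
Qed.

Lemma geod_seg_dist_end c a b L t :
  geod_seg d c a b L -> 0 <= t <= L -> d (c t) b = L - t.
Proof.
  intros (HL & _ & HcL & Hc) Ht. rewrite <- HcL, Hc, Rabs_left1; lra.
Qed.

Hypothesis Hm : is_metric d.
Hypothesis Hg : geodesic_space d.

Lemma geodesic_retract y z T : 0 <= T -> exists w, d y w <= T /\ d w z <= Rmax 0 (d y z - T).
Proof.
  intros HT. destruct (Rle_dec (d y z) T) as [Hz|Hz].
  - exists z. rewrite (metric_xx Hm). split; [exact Hz | apply Rmax_l].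
  - destruct (Hg y z) as [c Hc]. exists (c T).
    rewrite (geod_seg_dist_start Hc), (geod_seg_dist_end Hc) by lra.
    split; [lra | apply Rmax_r].
Qed.

Lemma geod_seg_concat y x q : d y q = d y x + d x q ->
  exists c, geod_seg d c y q (d y q) /\ c (d y x) = x.
Proof.
  intros E. destruct (Hg y x) as [s1 Hs1]. destruct (Hg x q) as [s2 Hs2].
  pose proof (metric_ge0 Hm y x) as Hr. pose proof (metric_ge0 Hm x q) as HL.
  set (r := d y x) in *. set (L := d x q) in *.
  assert (Hcross : forall s t, 0 <= s <= r -> r < t <= r + L -> d (s1 s) (s2 (t - r)) = t - s).
  { intros s t Hs Ht. apply Rle_antisym.
    - pose proof (metric_triangle Hm (s1 s) x (s2 (t - r))) as Htri.
      rewrite (geod_seg_dist_end Hs1), (geod_seg_dist_start Hs2) in Htri by lra. lra.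
    - pose proof (metric_triangle Hm y (s1 s) q) as Htri1.
      pose proof (metric_triangle Hm (s1 s) (s2 (t - r)) q) as Htri2.
      rewrite (geod_seg_dist_start Hs1) in Htri1 by lra.
      rewrite (geod_seg_dist_end Hs2) in Htri2 by lra. lra. }
  destruct Hs1 as (_ & Hs10 & Hs1r & Hs1). destruct Hs2 as (_ & _ & Hs2L & Hs2).
  exists (fun t => if Rle_dec t r then s1 t else s2 (t - r)). repeat split.
  - apply (metric_ge0 Hm).
  - destruct (Rle_dec 0 r); [exact Hs10 | lra].
  - destruct (Rle_dec (d y q) r).
    + assert (Hxq : x = q) by (apply (metric_eq0 Hm); fold L; lra).
      replace (d y q) with r by lra. rewrite <- Hxq. exact Hs1r.
    + replace (d y q - r) with L by lra. exact Hs2L.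
  - intros s t Hs Ht. rewrite E in Hs, Ht.
    destruct (Rle_dec s r); destruct (Rle_dec t r).
    + apply Hs1; lra.
    + rewrite Hcross by lra. rewrite Rabs_left1; lra.
    + rewrite (metric_sym Hm), Hcross by lra. rewrite Rabs_right; lra.
    + rewrite Hs2 by lra. f_equal. ring.
  - destruct (Rle_dec r r); [exact Hs1r | lra].
Qed.

Lemma ray_through_aligned y x q : geod_complete d -> y <> x -> d y q = d y x + d x q ->
  exists g, ray_from d y g /\ g (d y x) = x /\ g (d y q) = q.
Proof.
  intros Hgc Hne E. destruct (geod_seg_concat E) as [c [Hc Hcx]].
  pose proof (metric_ge0 Hm x q).
  assert (Hyx : 0 < d y x).
  { destruct (metric_ge0 Hm y x) as [Hpos|Hzero]; [exact Hpos|].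
    exfalso. apply Hne, (metric_eq0 Hm). auto. }
  destruct (Hgc c y q (d y q)) as [g [Hiso Hext]]; [lra | exact Hc |].
  destruct Hc as (_ & Hc0 & HcL & _).
  exists g. split; [split|split].
  - intros s t _ _. apply Hiso.
  - rewrite Hext; [exact Hc0 | lra].
  - rewrite Hext; [exact Hcx | lra].
  - rewrite Hext; [exact HcL | lra].
Qed.

End Geodesics.

Lemma eucl_scale k P Q : 0 <= k ->
  eucl (k * fst P, k * snd P) (k * fst Q, k * snd Q) = k * eucl P Q.
Proof.
  intros Hk. unfold eucl; cbn [fst snd].
  replace ((k * fst P - k * fst Q) ^ 2 + (k * snd P - k * snd Q) ^ 2)
    with ((k * k) * ((fst P - fst Q) ^ 2 + (snd P - snd Q) ^ 2)) by ring.
  rewrite sqrt_mult_alt, sqrt_square; auto. nra.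
Qed.

Lemma lerp_origin_start Q L t : L <> 0 -> lerp (0, 0) Q L t = (t / L * fst Q, t / L * snd Q).
Proof.
  intros HL. unfold lerp. destruct (Req_EM_T L 0) as [|_]; [contradiction|].
  simpl. f_equal; ring.
Qed.

Lemma lerp_origin_end P L t : L <> 0 -> lerp P (0, 0) L (L - t) = (t / L * fst P, t / L * snd P).
Proof.
  intros HL. unfold lerp. destruct (Req_EM_T L 0) as [|_]; [contradiction|].
  simpl. f_equal; field; auto.
Qed.

Lemma isosceles_triangle t D : 0 < t -> 0 <= D <= 2 * t ->
  exists Q P, eucl (0, 0) Q = t /\ eucl Q P = D /\ eucl P (0, 0) = t.
Proof.
  intros Ht HD.
  set (a := t - D * D / (2 * t)).
  assert (Ha : - t <= a <= t).
  { unfold a. assert (0 <= D * D / (2 * t) <= 2 * t); [|lra].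
    split; [apply Rle_mult_inv_pos; nra|].
    apply Rmult_le_reg_r with (2 * t); [lra|].
    unfold Rdiv. rewrite Rmult_assoc, Rinv_l by lra. nra. }
  set (b := sqrt (t * t - a * a)).
  assert (Hb : b * b = t * t - a * a) by (apply sqrt_sqrt; nra).
  assert (Hta : 2 * t * (t - a) = D * D) by (unfold a; field; lra).
  exists (t, 0), (a, b). unfold eucl; cbn [fst snd]. repeat split.
  - replace ((0 - t) ^ 2 + (0 - 0) ^ 2) with (t * t) by ring. apply sqrt_square. lra.
  - replace ((t - a) ^ 2 + (0 - b) ^ 2) with (D * D) by nra. apply sqrt_square. lra.
  - replace ((a - 0) ^ 2 + (b - 0) ^ 2) with (t * t) by nra. apply sqrt_square. lra.
Qed.

Section Rays.
Set Implicit Arguments.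
Variables (X : Type) (d : X -> X -> R).
Hypothesis Hm : is_metric d.
Hypothesis Hg : geodesic_space d.
Hypothesis Hcat : CAT0_comparison d.

Lemma ray_contraction y c c' t s : ray_from d y c -> ray_from d y c' -> 0 < t -> 0 <= s <= t ->
  d (c s) (c' s) <= s / t * d (c t) (c' t).
Proof.
  intros [Hc Hc0] [Hc' Hc'0] Ht Hs.
  assert (Hyc : d y (c t) = t) by (rewrite <- Hc0, Hc, Rabs_left1; lra).
  assert (Hc'y : d (c' t) y = t) by (rewrite <- Hc'0, Hc', Rabs_right; lra).
  set (D := d (c t) (c' t)).
  assert (HD : 0 <= D <= 2 * t).
  { split; [apply (metric_ge0 Hm)|].
    pose proof (metric_triangle Hm (c t) y (c' t)) as Htri.
    rewrite (metric_sym Hm (c t) y), (metric_sym Hm y (c' t)) in Htri. fold D in Htri. lra. }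
  destruct (isosceles_triangle Ht HD) as [Q [P [HOQ [HQP HPO]]]].
  assert (G1 : geod_seg d c y (c t) (d y (c t))).
  { rewrite Hyc. repeat split; auto; [lra | intros u v Hu Hv; apply Hc; lra]. }
  destruct (Hg (c t) (c' t)) as [c2 G2].
  assert (G3 : geod_seg d (fun u => c' (t - u)) (c' t) y (d (c' t) y)).
  { rewrite Hc'y. repeat split; [lra | f_equal; ring | rewrite <- Hc'0; f_equal; ring |].
    intros u v Hu Hv. rewrite Hc' by lra.
    replace (t - u - (t - v)) with (v - u) by ring. apply Rabs_minus_sym. }
  (* the third side runs backwards along c', so its point at time t - s is c' s *)
  pose proof (Hcat G1 G2 G3 (0, 0) Q P) as Hcmp. simpl in Hcmp.
  rewrite Hyc, Hc'y in Hcmp.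
  specialize (Hcmp HOQ HQP HPO S1 S3 s (t - s) Hs ltac:(lra)).
  replace (t - (t - s)) with s in Hcmp by ring.
  rewrite lerp_origin_start, lerp_origin_end, eucl_scale, HQP in Hcmp by
    (try apply Rle_mult_inv_pos; lra).
  exact Hcmp.
Qed.

Lemma asymp_right_euclidean (c c' z : R -> X) : asymp d c z -> asymp d c' z -> asymp d c c'.
Proof.
  intros [B1 H1] [B2 H2]. exists (B1 + B2). intros t Ht.
  pose proof (metric_triangle Hm (c t) (z t) (c' t)) as Htri.
  rewrite (metric_sym Hm (z t)) in Htri. specialize (H1 t Ht). specialize (H2 t Ht). lra.
Qed.

Lemma asymp_rays_eq y c c' : ray_from d y c -> ray_from d y c' -> asymp d c c' ->
  forall s, 0 <= s -> c s = c' s.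
Proof.
  intros Hc Hc' [B HB] s Hs.
  apply (metric_eq0 Hm), Rle_antisym; [|apply (metric_ge0 Hm)].
  apply le_of_le_add_eps. intros e He. rewrite Rplus_0_l.
  assert (HB0 : 0 <= B) by (eapply Rle_trans; [apply (metric_ge0 Hm) | apply (HB 0); lra]).
  (* the contraction factor [s / t] beats the bound [B] once [t >= s B / e] *)
  set (t := s + 1 + s * B / e).
  assert (Hst : s + 1 <= t).
  { unfold t. assert (0 <= s * B / e) by (apply Rle_mult_inv_pos; nra). lra. }
  eapply Rle_trans; [apply (ray_contraction (t := t) Hc Hc'); lra|].
  assert (Hsb : s * B <= e * t).
  { unfold t. replace (e * (s + 1 + s * B / e)) with (e * (s + 1) + s * B) by (field; lra). nra. }
  pose proof (HB t ltac:(lra)).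
  apply Rle_trans with (s / t * B); [apply Rmult_le_compat_l; auto; apply Rle_mult_inv_pos; lra|].
  unfold Rdiv. apply Rmult_le_reg_r with t; [lra|].
  replace (s * / t * B * t) with (s * B) by (field; lra). lra.
Qed.

End Rays.

Section HopfRinow.
Set Implicit Arguments.
Variables (X : Type) (d : X -> X -> R).
Hypothesis Hm : is_metric d.
Hypothesis Hg : geodesic_space d.
Hypothesis Hlc : locally_compact d.
Hypothesis Hcomp : complete_metric d.

Definition ball_in_compact y T := exists C, compact_set d C /\ forall z, d y z <= T -> C z.

Lemma ball_in_compact_le y T T' : ball_in_compact y T -> T' <= T -> ball_in_compact y T'.
Proof. intros [C [HC HCball]] HT. exists C. split; auto. intros z Hz. apply HCball. lra. Qed.

Lemma ball_in_compact_small y : exists r, 0 < r /\ ball_in_compact y r.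
Proof.
  destruct (Hlc y) as [C [r [Hr [HC HCball]]]].
  exists (r / 2). split; [lra|]. exists C. split; auto. intros z Hz. apply HCball. lra.
Qed.

Lemma ball_in_compact_extend y T : 0 <= T -> ball_in_compact y T ->
  exists eta, 0 < eta /\ ball_in_compact y (T + eta).
Proof.
  intros HT [C [HC HCball]].
  destruct (choice (fun x (Kr : (X -> Prop) * R) =>
              0 < snd Kr /\ compact_set d (fst Kr) /\ forall z, d x z < snd Kr -> fst Kr z))
    as [nbhd Hnbhd].
  { intros x. destruct (Hlc x) as [Kx [rx Hx]]. exists (Kx, rx). exact Hx. }
  destruct (HC X (fun x z => d x z < snd (nbhd x) / 2)) as [s Hs].
  { intros x. apply (ball_open Hm). }
  { intros x _. exists x. rewrite (metric_xx Hm). destruct (Hnbhd x). lra. }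
  (* a Lebesgue number for the cover of [C] by the compact neighbourhoods *)
  destruct (list_min_pos (fun x => snd (nbhd x) / 2) s) as [eta [Heta Hmin]].
  { intros x _. destruct (Hnbhd x). lra. }
  exists eta. split; auto.
  exists (fun z => exists x, In x s /\ fst (nbhd x) z). split.
  - apply compact_list_union. intros x _. apply Hnbhd.
  - intros z Hz. destruct (geodesic_retract Hm Hg y z HT) as [w [Hw Hwz]].
    destruct (Hs w (HCball w Hw)) as [x [Hx Hxw]].
    exists x. split; auto. apply Hnbhd.
    pose proof (metric_triangle Hm x w z). pose proof (Hmin x Hx).
    assert (Rmax 0 (d y z - T) <= eta) by (apply Rmax_lub; lra). lra.
Qed.

Lemma ball_in_compact_sup y T : 0 < T -> (forall T', T' < T -> ball_in_compact y T') ->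
  ball_in_compact y T.
Proof.
  intros HT Hbelow. exists (fun z => d y z <= T). split; auto.
  apply (compact_of_complete_totally_bounded Hm _ Hcomp).
  - intros l Hl. apply le_of_le_add_eps. intros e He.
    destruct (Hl e He) as [z [Hz Hzl]]. pose proof (metric_triangle Hm y z l). lra.
  - intros e He. set (T' := Rmax 0 (T - e / 2)).
    assert (HT' : 0 <= T' < T) by (split; [apply Rmax_l | apply Rmax_lub_lt; lra]).
    destruct (Hbelow T' (proj2 HT')) as [C [HC HCball]].
    destruct (compact_totally_bounded Hm HC (e := e / 2)) as [L HL]; [lra|].
    exists L. intros z Hz. destruct (geodesic_retract Hm Hg y z (proj1 HT')) as [w [Hw Hwz]].
    destruct (HL w (HCball w Hw)) as [c [Hc Hcw]]. exists c. split; auto.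
    pose proof (metric_triangle Hm c w z). pose proof (Rmax_r 0 (T - e / 2)) as HT'e.
    assert (Rmax 0 (d y z - T') <= e / 2) by (apply Rmax_lub; fold T' in HT'e; lra). lra.
Qed.

Lemma ball_in_compact_all y T : ball_in_compact y T.
Proof.
  apply NNPP. intros HT.
  assert (Hbound : bound (ball_in_compact y)).
  { exists T. intros T' HT'. apply Rnot_lt_le. intros Hlt.
    exact (HT (ball_in_compact_le HT' (Rlt_le _ _ Hlt))). }
  destruct (ball_in_compact_small y) as [r0 [Hr0 G0]].
  destruct (completeness _ Hbound (ex_intro _ r0 G0)) as [m [Hub Hlub]].
  assert (Hr0m : r0 <= m) by (apply Hub; exact G0).
  assert (Gm : ball_in_compact y m).
  { apply ball_in_compact_sup; [lra|]. intros T' HT'. apply NNPP. intros Hn.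
    assert (m <= T'); [|lra].
    apply Hlub. intros T'' HT''. apply Rnot_lt_le. intros Hlt.
    exact (Hn (ball_in_compact_le HT'' (Rlt_le _ _ Hlt))). }
  destruct (ball_in_compact_extend (y := y) (T := m) ltac:(lra) Gm) as [eta [Heta Gm']].
  pose proof (Hub _ Gm'). lra.
Qed.

End HopfRinow.

Section Shadows.
Set Implicit Arguments.
Variables (X : Type) (d : X -> X -> R).
Hypothesis Hm : is_metric d.
Hypothesis Hg : geodesic_space d.
Hypothesis Hcat : CAT0_comparison d.

Lemma ray_dist_origin y g t : ray_from d y g -> 0 <= t -> d y (g t) = t.
Proof. intros [Hiso <-] Ht. rewrite Hiso, Rabs_left1; lra. Qed.

Lemma bd_shadow_of_ray y x g t : ray_from d y g -> 0 <= t -> g t = x -> bd_shadow d y x g.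
Proof.
  intros Hg0 Ht Hgt. exists g. split; [exact Hg0|]. split; [|eauto].
  exists 0. intros s _. rewrite (metric_xx Hm). lra.
Qed.

Lemma Nbhd_of_rays y K eps (V : (R -> X) -> Prop) zeta g g1 :
  ray_from d y g -> V g -> ray_from d y g1 -> asymp d g1 zeta -> 0 <= K ->
  d (g K) (g1 K) < eps -> Nbhd d y K eps V zeta.
Proof.
  intros Hg0 HV Hg1 Hg1z HK Hclose. exists g. split; [apply Hg0|]. split; [exact HV|].
  intros c cs Hc Hcg Hcs Hcsz.
  rewrite (asymp_rays_eq Hm Hg Hcat Hc Hg0 Hcg HK).
  rewrite (asymp_rays_eq Hm Hg Hcat Hcs Hg1 (asymp_right_euclidean Hm Hcsz Hg1z) HK).
  exact Hclose.
Qed.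

Lemma aligned_ray_near y x0 q g1 K M : geod_complete d -> y <> x0 ->
  d y q = d y x0 + d x0 q -> ray_from d y g1 -> 0 <= K <= M -> 0 < M ->
  exists g, ray_from d y g /\ g (d y x0) = x0 /\ d (g K) (g1 K) <= 2 * d q (g1 M).
Proof.
  intros Hgc Hne Hq Hg1 HK HM.
  destruct (ray_through_aligned Hm Hg q Hgc Hne Hq) as [g [Hg0 [Hgx0 Hgq]]].
  exists g. split; [exact Hg0|]. split; [exact Hgx0|].
  assert (HgM : d (g M) q <= d q (g1 M)).
  { rewrite <- Hgq at 1. destruct Hg0 as [Hiso _].
    rewrite Hiso by (try apply (metric_ge0 Hm); lra).
    pose proof (metric_triangle Hm y q (g1 M)) as Htri1.
    pose proof (metric_triangle Hm y (g1 M) q) as Htri2.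
    rewrite (ray_dist_origin Hg1) in Htri1, Htri2 by lra.
    rewrite (metric_sym Hm (g1 M) q) in Htri2.
    apply Rabs_le. lra. }
  pose proof (ray_contraction Hm Hg Hcat (s := K) Hg0 Hg1 HM HK).
  pose proof (metric_triangle Hm (g M) q (g1 M)).
  assert (0 <= K / M <= 1).
  { split; [apply Rle_mult_inv_pos; lra|].
    apply Rmult_le_reg_r with M; [lra|]. unfold Rdiv. rewrite Rmult_assoc, Rinv_l; lra. }
  pose proof (metric_ge0 Hm (g M) (g1 M)). nra.
Qed.

Lemma aligned_points_near y x0 M e : ball_in_compact d y M -> 0 < e ->
  exists delta, 0 < delta /\ forall p, d y p = M -> d x0 p < M - d y x0 + delta ->
    exists q, d y q = d y x0 + d x0 q /\ d q p < e.
Proof.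
  intros [C [HC HCball]] He.
  (* [d x0 p + d y x0 - d y p] vanishes exactly when x0 lies on a geodesic from y to p *)
  destruct (compact_lsc_small_in_open
              (W := fun p => exists q, d y q = d y x0 + d x0 q /\ d q p < e)
              (fun p => d x0 p + d y x0 - d y p) HC) as [delta [Hdelta Hsmall]].
  - intros p [q [Hq Hqp]]. exists (e - d q p). split; [lra|].
    intros p' Hpp'. exists q. split; [exact Hq|]. pose proof (metric_triangle Hm q p p'). lra.
  - intros a p Hp. exists ((d x0 p + d y x0 - d y p - a) / 2). split; [lra|].
    intros p' Hpp'. pose proof (metric_triangle Hm x0 p' p) as Htri1.
    pose proof (metric_triangle Hm y p p'). rewrite (metric_sym Hm p' p) in Htri1. lra.
  - intros p _ Hp. destruct (metric_triangle Hm y x0 p) as [Hlt|Heq]; [lra|]. exfalso. apply Hp.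
    exists p. rewrite (metric_xx Hm). split; [lra | exact He].
  - exists delta. split; [exact Hdelta|]. intros p Hp Hclose.
    apply Hsmall; [apply HCball|]; lra.
Qed.

End Shadows.

Theorem corollary4 (X : Type) (d : X -> X -> R) :
  CAT0 d -> locally_compact d -> geod_complete d -> connected_at_infinity d ->
  forall x0 y : X, y <> x0 ->
  forall K eps : R, 0 < K -> 0 < eps ->
  exists delta, 0 < delta /\
    forall x1 : X, d x0 x1 < delta -> d y x1 = d y x0 ->
    forall zeta : R -> X, is_ray d zeta -> bd_shadow d y x1 zeta ->
      Nbhd d y K eps (bd_shadow d y x0) zeta.
Proof.
  intros (Hm & Hcomp & Hg & Hcat) Hlc Hgc _ x0 y Hne K eps HK Heps.
  pose proof (metric_ge0 Hm y x0) as Hr.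
  set (M := K + d y x0).
  assert (HM : M = K + d y x0) by reflexivity.
  destruct (aligned_points_near Hm x0 (ball_in_compact_all Hm Hg Hlc Hcomp y M) (e := eps / 2))
    as [delta [Hdelta Hnear]]; [lra|].
  exists delta. split; [exact Hdelta|].
  intros x1 Hx1 Hyx1 zeta _ [g1 [Hg1 [Hg1z [t [Ht Hg1t]]]]].
  assert (Htr : t = d y x0) by (rewrite <- (ray_dist_origin Hg1 Ht), Hg1t; exact Hyx1).
  subst t.
  destruct (Hnear (g1 M)) as [q [Hq Hqp]].
  - apply (ray_dist_origin Hg1). lra.
  - pose proof (metric_triangle Hm x0 x1 (g1 M)) as Htri.
    destruct Hg1 as [Hiso _]. rewrite <- Hg1t in Htri at 2.
    rewrite Hiso, Rabs_left1 in Htri by lra. lra.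
  - destruct (aligned_ray_near Hm Hg Hcat q (K := K) (M := M) Hgc Hne Hq Hg1)
      as [g [Hg0 [Hgx0 Hclose]]]; [lra | lra |].
    apply (Nbhd_of_rays Hm Hg Hcat _ Hg0 (bd_shadow_of_ray Hm Hg0 Hr Hgx0) Hg1 Hg1z); lra.
Qed.
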